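(* Let $A,B\subseteq\Sigma^+$ (not necessarily finite) and $k\ge1$. The term $\langle A,B\rangle$ has a deduction tree of size $k$ if and only if there is a formula $\phi\in\mathrm{LTL}[\mathsf{X},\mathsf{wX},\mathsf{F},\mathsf{G}]$ separating $A$ from $B$ with $\mathrm{size}(\phi)=k$.
   Context: Let $AP$ be a finite set of atomic propositions and $\Sigma=2^{AP}$. Formulae of $\mathrm{LTL}[\mathsf{X},\mathsf{wX},\mathsf{F},\mathsf{G}]$ are generated by $\phi::=p\mid\neg p\mid\phi\lor\phi\mid\phi\land\phi\mid\mathsf{X}\phi\mid\mathsf{wX}\phi\mid\mathsf{F}\phi\mid\mathsf{G}\phi$ ($p\in AP$), interpreted on $\sigma\in\Sigma^+$ at positions $0\le i<|\sigma|$: literals/Booleans as usual; $\mathsf{X}\phi$: $i+1<|\sigma|$ and $\phi$ at $i+1$; $\mathsf{wX}\phi$: $i+1=|\sigma|$ or $\phi$ at $i+1$; $\mathsf{F}\phi$/$\mathsf{G}\phi$: $\phi$ at some/every $j$ with $i\le j<|\sigma|$. Size: literals 1, unary operators add 1, binary connectives sum sizes plus 1. For $C\subseteq\Sigma^+$, write $C\models\phi$ if $\sigma,0\models\phi$ for all $\sigma\in C$ and $C\perp\phi$ if $\sigma,0\not\models\phi$ for all $\sigma\in C$; $\phi$ separates $A$ from $B$ if $A\models\phi$ and $B\perp\phi$. Notation: for $\sigma=w_0\cdots w_m$ and $j\le m$, $\sigma^{(j)}=w_j\cdots w_m$; $A^{\mathsf X}=\{\sigma^{(1)}:\sigma\in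 A,|\sigma|\ge2\}$; $A^{\mathsf G}=\{\sigma^{(j)}:\sigma\in A, 0\le j<|\sigma|\}$; a future point for $A$ is a map $f:A\to\mathbb N$ with $f(\sigma)<|\sigma|$ for all $\sigma\in A$, and then $A^f=\{\sigma^{(f(\sigma))}:\sigma\in A\}$. Proof system: terms are pairs $\langle A,B\rangle$ with $A,B\subseteq\Sigma^+$; the rules (conclusion from hypotheses) are: Atomic: $\langle A,B\rangle$ with no hypotheses, provided $A\models\alpha$ and $B\perp\alpha$ for some literal $\alpha$; Or: $\langle A_1\uplus A_2,B\rangle$ from $\langle A_1,B\rangle$ and $\langle A_2,B\rangle$ ($\uplus$ = union of disjoint sets); And: $\langle A,B_1\uplus B_2\rangle$ from $\langle A,B_1\rangle$ and $\langle A,B_2\rangle$; Next: $\langle A,B\rangle$ from $\langle A^{\mathsf X},B^{\mathsf X}\rangle$ provided $|A^{\mathsf X}|=|A|$; WeakNext: $\langle A,B\rangle$ from $\langle A^{\mathsf X},B^{\mathsf X}\rangle$ provided $|B^{\mathsf X}|=|B|$; Future: $\langle A,B\rangle$ from $\langle A^f,B^{\mathsf G}\rangle$ for some future point $f$ for $A$; Globally: $\langle A,B\rangle$ from $\langle A^{\mathsf G},B^f\rangle$ for some future point $f$ for $B$. A deduction tree for $\langle A,B\rangle$ is a finite tree of rule applications with root conclusion $\langle A,B\rangle$, in which every hypothesis is the conclusion of a rule application (so all branches end in Atomic); its size is the number of rule applications in it. *)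

From mathcomp Require Import all_boot.
Set Implicit Arguments. Unset Strict Implicit. Unset Printing Implicit Defensive.

Section LTL.
Variable AP : finType.

(* A letter of Sigma = 2^AP is a set of atomic propositions; a word is a
   sequence of letters (words of Sigma^+ are the nonempty ones). *)
Definition letter := {set AP}.
Definition word := seq letter.
Definition wset := word -> Prop.

Inductive formula : Type :=
| Pos of AP
| Neg of AP
| Or of formula & formula
| And of formula & formula
| Next of formula
| WNext of formula
| Fut of formula
| Glob of formula.

Fixpoint fsize (phi : formula) : nat :=
  match phi with
  | Pos _ | Neg _ => 1
  | Or a b | And a b => fsize a + fsize b + 1
  | Next a | WNext a | Fut a | Glob a => fsize a + 1
  end.

(* sat s i phi : s, i |= phi  (meaningful for i < size s) *)
Fixpoint sat (s : word) (i : nat) (phi : formula) : Prop :=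
  match phi with
  | Pos p => p \in nth set0 s i
  | Neg p => p \notin nth set0 s i
  | Or a b => sat s i a \/ sat s i b
  | And a b => sat s i a /\ sat s i b
  | Next a => i.+1 < size s /\ sat s i.+1 a
  | WNext a => i.+1 = size s \/ sat s i.+1 a
  | Fut a => exists j, i <= j < size s /\ sat s j a
  | Glob a => forall j, i <= j < size s -> sat s j a
  end.

Definition models (C : wset) (phi : formula) : Prop := forall s, C s -> sat s 0 phi.
Definition perp (C : wset) (phi : formula) : Prop := forall s, C s -> ~ sat s 0 phi.
Definition separates (phi : formula) (A B : wset) : Prop := models A phi /\ perp B phi.

Definition is_literal (phi : formula) : Prop :=
  match phi with Pos _ | Neg _ => True | _ => False end.

(* sigma^(j) = drop j sigma *)
Definition setX (A : wset) : wset :=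
  fun t => exists2 s, A s & (1 < size s /\ t = drop 1 s).
Definition setG (A : wset) : wset :=
  fun t => exists2 s, A s & exists2 j, j < size s & t = drop j s.
Definition future_point (A : wset) (f : word -> nat) : Prop :=
  forall s, A s -> f s < size s.
Definition setF (A : wset) (f : word -> nat) : wset :=
  fun t => exists2 s, A s & t = drop (f s) s.

(* deduction A B k : the term <A,B> has a deduction tree of size k
   (k = number of rule applications). *)
Inductive deduction : wset -> wset -> nat -> Prop :=
| R_atomic A B alpha :
    is_literal alpha -> models A alpha -> perp B alpha -> deduction A B 1
| R_or A A1 A2 B n1 n2 :
    (forall s, A s <-> A1 s \/ A2 s) -> (forall s, ~ (A1 s /\ A2 s)) ->
    deduction A1 B n1 -> deduction A2 B n2 -> deduction A B (n1 + n2 + 1)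
| R_and A B B1 B2 n1 n2 :
    (forall s, B s <-> B1 s \/ B2 s) -> (forall s, ~ (B1 s /\ B2 s)) ->
    deduction A B1 n1 -> deduction A B2 n2 -> deduction A B (n1 + n2 + 1)
| R_next A B n :
    (* |A^X| = |A| : no word of A is lost, i.e. all have length >= 2 *)
    (forall s, A s -> 1 < size s) ->
    deduction (setX A) (setX B) n -> deduction A B (n + 1)
| R_wnext A B n :
    (forall s, B s -> 1 < size s) ->
    deduction (setX A) (setX B) n -> deduction A B (n + 1)
| R_future A B f n :
    future_point A f ->
    deduction (setF A f) (setG B) n -> deduction A B (n + 1)
| R_globally A B f n :
    future_point B f ->
    deduction (setG A) (setF B f) n -> deduction A B (n + 1).

End LTL.

(* Each rule is the semantic reading of one connective (Atomic, Or, And,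
   Next, WeakNext, Future, Globally for literals, disjunction, conjunction,
   X, wX, F, G), and a rule application adds 1 to the size exactly as the
   connective does.  So a deduction tree yields a separating formula of the
   same size by induction on the tree, and conversely by induction on the
   formula: a disjunction splits A according to whether the first disjunct
   holds, a conjunction splits B according to whether the first conjunct
   fails, and F (resp. G) provides, by choice, a future point at a witness
   (resp. counterexample) position.  Nonemptiness of words matters only for
   wX, which holds vacuously at the last letter. *)
From Pilot Require Import Defs.
From Stdlib Require Import Classical ClassicalEpsilon.
From mathcomp Require Import all_boot zify.

Set Implicit Arguments.
Unset Strict Implicit.
Unset Printing Implicit Defensive.

Section Separation.
Variable AP : finType.
Implicit Types (phi a b : formula AP) (A B C : wset AP) (s : word AP).

Definition nonempty_words C := forall s, C s -> 0 < size s.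

Lemma sat_drop phi s j i : sat (drop j s) i phi <-> sat s (i + j) phi.
Proof.
elim: phi s j i => [p|p|a IHa b IHb|a IHa b IHb|a IHa|a IHa|a IHa|a IHa] s j i /=.
- by rewrite nth_drop addnC.
- by rewrite nth_drop addnC.
- by rewrite IHa IHb.
- by rewrite IHa IHb.
- by rewrite IHa size_drop addSn; split=> -[lt_s sat_a]; split=> //; lia.
- rewrite IHa size_drop addSn.
  by split=> -[eq_s|sat_a]; [left; lia | right | left; lia | right].
- split=> -[j' [lt_j' sat_a]].
  + exists (j' + j); rewrite -IHa; split=> //; rewrite size_drop in lt_j'; lia.
  + exists (j' - j); rewrite IHa subnK; [split=> // | ]; rewrite ?size_drop; lia.
- split=> sat_a j' lt_j'.
  + rewrite -(subnK (_ : j <= j')); last lia.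
    by apply/IHa/sat_a; rewrite size_drop; lia.
  + by apply/IHa/sat_a; rewrite size_drop in lt_j'; lia.
Qed.

Lemma sat_drop0 phi s j : sat (drop j s) 0 phi <-> sat s j phi.
Proof. by rewrite sat_drop. Qed.

Lemma nonempty_sub C D : (forall s, D s -> C s) ->
  nonempty_words C -> nonempty_words D.
Proof. by move=> subDC neC s /subDC /neC. Qed.

Lemma nonempty_setX A : nonempty_words (Defs.setX A).
Proof. by move=> t [s _ [lt_s ->]]; rewrite size_drop subn_gt0. Qed.

Lemma nonempty_setG A : nonempty_words (setG A).
Proof. by move=> t [s _ [j lt_j ->]]; rewrite size_drop subn_gt0. Qed.

Lemma nonempty_setF A f : future_point A f -> nonempty_words (setF A f).
Proof. by move=> fA t [s As ->]; rewrite size_drop subn_gt0 fA. Qed.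

Lemma future_point_choice A (P : word AP -> nat -> Prop) :
  (forall s, A s -> exists2 j, j < size s & P s j) ->
  exists2 f, future_point A f & forall s, A s -> P s (f s).
Proof.
move=> exP; pose Q s j := j < size s /\ P s j.
pose f s := epsilon (inhabits 0) (Q s).
have fP s : A s -> Q s (f s).
  by move=> /exP [j lt_j Psj]; apply: (epsilon_spec _ (Q s)); exists j.
by exists f => s /fP [].
Qed.

Lemma deduction_or_split A B (P : word AP -> Prop) n1 n2 :
  deduction (fun s => A s /\ P s) B n1 ->
  deduction (fun s => A s /\ ~ P s) B n2 -> deduction A B (n1 + n2 + 1).
Proof.
apply: R_or => [s|s [[_ Ps] [_ nPs]] //].
by split=> [As | [] []//]; case: (classic (P s)); [left | right].
Qed.

Lemma deduction_and_split A B (P : word AP -> Prop) n1 n2 :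
  deduction A (fun s => B s /\ ~ P s) n1 ->
  deduction A (fun s => B s /\ P s) n2 -> deduction A B (n1 + n2 + 1).
Proof.
apply: R_and => [s|s [[_ nPs] [_ Ps]] //].
by split=> [Bs | [] []//]; case: (classic (P s)); [right | left].
Qed.

Lemma separates_Or a b A A1 A2 B : (forall s, A s -> A1 s \/ A2 s) ->
  separates a A1 B -> separates b A2 B -> separates (Or a b) A B.
Proof.
move=> coverA [A1a Ba] [A2b Bb]; split=> s.
- by case/coverA=> [/A1a|/A2b]; [left | right].
- by move=> Bs /= [/(Ba s Bs)|/(Bb s Bs)].
Qed.

Lemma separates_OrE a b A B : separates (Or a b) A B ->
  separates a (fun s => A s /\ sat s 0 a) B /\
  separates b (fun s => A s /\ ~ sat s 0 a) B.
Proof.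
move=> [Aab Bab]; split; split.
- by move=> s [].
- by move=> s Bs sa; apply: (Bab s Bs); left.
- by move=> s [As nsa]; case: (Aab s As).
- by move=> s Bs sb; apply: (Bab s Bs); right.
Qed.

Lemma separates_And a b A B B1 B2 : (forall s, B s -> B1 s \/ B2 s) ->
  separates a A B1 -> separates b A B2 -> separates (And a b) A B.
Proof.
move=> coverB [Aa B1a] [Ab B2b]; split=> s.
- by move=> As; split; [apply: Aa | apply: Ab].
- case/coverB=> [B1s [sa _] | B2s [_ sb]]; first exact: B1a B1s sa.
  exact: B2b B2s sb.
Qed.

Lemma separates_AndE a b A B : separates (And a b) A B ->
  separates a A (fun s => B s /\ ~ sat s 0 a) /\
  separates b A (fun s => B s /\ sat s 0 a).
Proof.
move=> [Aab Bab]; split; split.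
- by move=> s /Aab [].
- by move=> s [Bs nsa].
- by move=> s /Aab [].
- by move=> s [Bs sa] sb; apply: (Bab s Bs).
Qed.

Lemma separates_Next a A B : (forall s, A s -> 1 < size s) ->
  separates a (Defs.setX A) (Defs.setX B) -> separates (Next a) A B.
Proof.
move=> longA [Aa Ba]; split=> s.
- move=> As; have lt_s := longA s As.
  by split=> //; apply/sat_drop0/Aa; exists s.
- move=> Bs /= [lt_s sa]; apply: (Ba (drop 1 s)); [by exists s | exact/sat_drop0].
Qed.

Lemma separates_NextE a A B : separates (Next a) A B ->
  (forall s, A s -> 1 < size s) /\ separates a (Defs.setX A) (Defs.setX B).
Proof.
move=> [Aa Ba]; split; [|split].
- by move=> s /Aa [].
- by move=> t [s As [_ ->]]; apply/sat_drop0; case: (Aa s As).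
- by move=> t [s Bs [lt_s ->]] /sat_drop0 sa; apply: (Ba s Bs).
Qed.

Lemma separates_WNext a A B : nonempty_words A ->
  (forall s, B s -> 1 < size s) ->
  separates a (Defs.setX A) (Defs.setX B) -> separates (WNext a) A B.
Proof.
move=> neA longB [Aa Ba]; split=> s Bs /=.
  case: (ltngtP 1 (size s)) => [lt_s||]; last by left.
    by right; apply/sat_drop0/Aa; exists s.
  by have := neA s Bs; lia.
case=> [eq_s|sa]; first by have := longB s Bs; lia.
have lt_s := longB s Bs.
by apply: (Ba (drop 1 s)); [exists s | apply/sat_drop0].
Qed.

Lemma separates_WNextE a A B : nonempty_words B ->
  separates (WNext a) A B ->
  (forall s, B s -> 1 < size s) /\ separates a (Defs.setX A) (Defs.setX B).
Proof.
move=> neB [Aa Ba]; have longB s : B s -> 1 < size s.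
  move=> Bs; case: (ltngtP 1 (size s)) => [//|lt_s|eq_s].
  - by have := neB s Bs; lia.
  - by case: (Ba s Bs); left.
split=> //; split.
- by move=> t [s As [lt_s ->]]; apply/sat_drop0; case: (Aa s As) => //; lia.
- by move=> t [s Bs [_ ->]] /sat_drop0 sa; apply: (Ba s Bs); right.
Qed.

Lemma separates_Fut a A B f : future_point A f ->
  separates a (setF A f) (setG B) -> separates (Fut a) A B.
Proof.
move=> fA [Aa Ba]; split=> s Bs /=.
  by exists (f s); split; [exact: fA | apply/sat_drop0/Aa; exists s].
case=> j [lt_j sa]; apply: (Ba (drop j s)); last exact/sat_drop0.
by exists s => //; exists j.
Qed.

Lemma separates_FutE a A B : separates (Fut a) A B ->
  exists2 f, future_point A f & separates a (setF A f) (setG B).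
Proof.
move=> [Aa Ba]; have [|f fA fP] := @future_point_choice A (fun s j => sat s j a).
  by move=> s /Aa [j [lt_j sa]]; exists j.
exists f => //; split=> [t [s As ->]|t [s Bs [j lt_j ->]] /sat_drop0 sa].
  exact/sat_drop0/fP.
by apply: (Ba s Bs); exists j.
Qed.

Lemma separates_Glob a A B f : future_point B f ->
  separates a (setG A) (setF B f) -> separates (Glob a) A B.
Proof.
move=> fB [Aa Ba]; split=> s Bs /=.
  by move=> j lt_j; apply/sat_drop0/Aa; exists s => //; exists j.
move=> sa; apply: (Ba (drop (f s) s)); first by exists s.
by apply/sat_drop0/sa; rewrite fB.
Qed.

Lemma separates_GlobE a A B : separates (Glob a) A B ->
  exists2 f, future_point B f & separates a (setG A) (setF B f).
Proof.
move=> [Aa Ba]; have [|f fB fP] := @future_point_choice B (fun s j => ~ sat s j a).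
  move=> s Bs; apply: NNPP => noj; apply: (Ba s Bs) => j /andP [_ lt_j].
  by apply: NNPP => sa; apply: noj; exists j.
exists f => //; split=> [t [s As [j lt_j ->]]|t [s Bs ->] /sat_drop0].
  by apply/sat_drop0; apply: (Aa s As).
exact: fP.
Qed.

Lemma deduction_separates A B k : deduction A B k -> nonempty_words A ->
  exists phi, separates phi A B /\ fsize phi = k.
Proof.
elim=> {A B k}.
- move=> A B alpha lit Aalpha Balpha _; exists alpha; split=> //.
  by case: alpha lit {Aalpha Balpha}.
- move=> A A1 A2 B n1 n2 defA _ _ IH1 _ IH2 neA.
  have [a [sepa <-]] : exists a, separates a A1 B /\ fsize a = n1.
    by apply: IH1; apply: nonempty_sub neA => s A1s; apply/defA; left.
  have [b [sepb <-]] : exists b, separates b A2 B /\ fsize b = n2.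
    by apply: IH2; apply: nonempty_sub neA => s A2s; apply/defA; right.
  by exists (Or a b); split=> //; apply: separates_Or sepa sepb => s /defA.
- move=> A B B1 B2 n1 n2 defB _ _ IH1 _ IH2 neA.
  have [a [sepa <-]] := IH1 neA; have [b [sepb <-]] := IH2 neA.
  by exists (And a b); split=> //; apply: separates_And sepa sepb => s /defB.
- move=> A B n longA _ IH _; have [a [sep <-]] := IH (@nonempty_setX A).
  by exists (Next a); split; first exact: separates_Next.
- move=> A B n longB _ IH neA; have [a [sep <-]] := IH (@nonempty_setX A).
  by exists (WNext a); split; first exact: separates_WNext.
- move=> A B f n fA _ IH _; have [a [sep <-]] := IH (nonempty_setF fA).
  by exists (Fut a); split; first exact: separates_Fut sep.
- move=> A B f n fB _ IH _; have [a [sep <-]] := IH (@nonempty_setG A).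
  by exists (Glob a); split; first exact: separates_Glob sep.
Qed.

Lemma separates_deduction phi A B : nonempty_words B ->
  separates phi A B -> deduction A B (fsize phi).
Proof.
elim: phi A B => [p|p|a IHa b IHb|a IHa b IHb|a IHa|a IHa|a IHa|a IHa] A B neB sep /=.
- by apply: (R_atomic (alpha := Pos p)); case: sep.
- by apply: (R_atomic (alpha := Neg p)); case: sep.
- have [sep_a sep_b] := separates_OrE sep.
  by apply: deduction_or_split; [apply: IHa sep_a | apply: IHb sep_b].
- have [sep_a sep_b] := separates_AndE sep.
  by apply: deduction_and_split; [apply: IHa sep_a | apply: IHb sep_b];
    apply: nonempty_sub neB => s [].
- have [longA sep_a] := separates_NextE sep.
  by apply: R_next => //; apply: IHa (@nonempty_setX B) sep_a.
- have [longB sep_a] := separates_WNextE neB sep.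
  by apply: R_wnext => //; apply: IHa (@nonempty_setX B) sep_a.
- have [f fA sep_a] := separates_FutE sep.
  by apply: (R_future fA); apply: IHa (@nonempty_setG B) sep_a.
- have [f fB sep_a] := separates_GlobE sep.
  by apply: (R_globally fB); apply: IHa (nonempty_setF fB) sep_a.
Qed.

End Separation.

Theorem theorem3 (AP : finType) (A B : wset AP) (k : nat) :
  (forall s, A s -> 0 < size s) ->
  (forall s, B s -> 0 < size s) ->
  0 < k ->
  deduction A B k <-> exists phi : formula AP, separates phi A B /\ fsize phi = k.
Proof.
move=> neA neB _; split=> [ded | [phi [sep <-]]].
- exact: deduction_separates ded neA.
- exact: separates_deduction neB sep.
Qed.
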